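(* Let $k\ge 1$, $n=2k$, $a\in\mathbb{D}\setminus\{0\}$, $\sigma_a(z)=\frac{z-a}{1-\overline{a}z}$, $h(z)=z^{n}$, and let $B=\sigma_a\circ h\circ\sigma_a^{-1}$ be a reducible Blaschke product of degree $2k$ with conjugate factor $\sigma_a$. List the $2k$ distinct $2k$-th roots of $a$ as $\omega_1,\dots,\omega_{2k}$ in increasing order of principal argument in $[0,2\pi)$ (indices taken modulo $2k$), so that the zeros of $B$ are $\sigma_a(\omega_1),\dots,\sigma_a(\omega_{2k})$. Then: (1) for every $j$, the hyperbolic geodesic in the Poincaré disk through the ''opposite'' zeros $\sigma_a(\omega_j)$ and $\sigma_a(-\omega_j)=\sigma_a(\omega_{j+k})$ passes through $-a$; thus $-a$ lies at the intersection of the hyperbolic geodesics through opposite pairs of zeros of $B$; (2) for every $j$, the unsigned angle at $\sigma_a(\omega_j)$ between the hyperbolic geodesic through $\sigma_a(\omega_{j-1}),\sigma_a(\omega_j)$ and the hyperbolic geodesic through $\sigma_a(\omega_j),\sigma_a(\omega_{j+1})$ equals the unsigned angle at $\omega_j$ between the hyperbolic geodesic through $\omega_{j-1},\omega_j$ and the hyperbolic geodesic through $\omega_j,\omega_{j+1}$.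
   Context: $\mathbb{D}$ is the open unit disk with the Poincaré (hyperbolic) metric; its geodesics are the diameters of $\mathbb{D}$ and the arcs in $\mathbb{D}$ of circles meeting the unit circle orthogonally. A degree-$n$ Blaschke product $B$ is called reducible if $B=\sigma_a\circ h\circ\sigma_a^{-1}$ for some $a\in\mathbb{D}$, with $\sigma_a(z)=\frac{z-a}{1-\overline{a}z}$, $h(z)=z^n$; $\sigma_a$ is its conjugate factor. *)

From Stdlib Require Import Reals Arith.
From Coquelicot Require Import Coquelicot.
Open Scope R_scope.

Definition in_disk (z : C) : Prop := Cmod z < 1.

Definition sigma_a (a z : C) : C := Cdiv (Cminus z a) (Cminus 1 (Cmult (Cconj a) z)).

(** Hyperbolic geodesics of the Poincare disk, given by data:
    - [Diam u]   : the diameter of D in the direction u (u <> 0),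
    - [Orth c r] : the arc in D of the circle |z - c| = r meeting the unit
                   circle orthogonally (|c|^2 = 1 + r^2). *)
Inductive geod : Type := Diam (u : C) | Orth (c : C) (r : R).

Definition valid_geod (g : geod) : Prop :=
  match g with
  | Diam u => u <> 0%C
  | Orth c r => 0 < r /\ (Cmod c) ^ 2 = 1 + r ^ 2
  end.

Definition on_geod (g : geod) (z : C) : Prop :=
  in_disk z /\
  match g with
  | Diam u => Im (Cmult z (Cconj u)) = 0
  | Orth c r => Cmod (Cminus z c) = r
  end.

Definition geod_through (g : geod) (p q : C) : Prop :=
  valid_geod g /\ on_geod g p /\ on_geod g q.

Definition tangent (g : geod) (p : C) : C :=
  match g with
  | Diam u => u
  | Orth c r => Cmult Ci (Cminus p c)
  end.

(** Unsigned angle in [0, pi/2] between the (undirected) lines spanned by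
    the nonzero vectors d1 and d2. *)
Definition line_angle (d1 d2 : C) : R :=
  acos (Rabs (Re (Cmult d1 (Cconj d2))) / (Cmod d1 * Cmod d2)).

Definition geod_angle (g1 g2 : geod) (p : C) : R :=
  line_angle (tangent g1 p) (tangent g2 p).

Definition is_arg (z : C) (t : R) : Prop :=
  0 <= t < 2 * PI /\ z = (Cmod z * cos t, Cmod z * sin t).

(* Geodesics of the disk are zero sets of functions that are real-affine in the
   lifted point [(z, |z|^2 + 1)], and [sigma_a a] acts on lifted points linearly up
   to positive factors.  As [-a = sigma_a a 0] and the lift of [0] is a positive
   combination of the lifts of [w] and [-w], every geodesic through [sigma_a a w] and
   [sigma_a a (-w)] contains [-a]; the sorted [2k]-th roots of [a] have equally
   spaced arguments, so [w (j + k) = - w j].  For the angles: the tangent at [P] of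
   the geodesic through [P] and [Q] is a real multiple of [(Q - P)(1 - P conj Q)],
   and [sigma_a a] multiplies these directions at [p] by real factors and a single
   complex factor, which leaves the angles between tangent lines unchanged. *)

From Stdlib Require Import Reals Arith Lra Lia Psatz.
From Coquelicot Require Import Coquelicot.
Open Scope R_scope.

Lemma Cmod_sub_sq (z c : C) :
  Cmod (z - c) ^ 2 = Cmod z ^ 2 - 2 * Re (z * Cconj c) + Cmod c ^ 2.
Proof. rewrite !Cmod2_alt; destruct z, c; simpl; ring. Qed.

Lemma Cmult_neq_1_in_disk (x y : C) : in_disk x -> in_disk y -> (x * y)%C <> 1%C.
Proof.
  unfold in_disk; intros Hx Hy E.
  apply (f_equal Cmod) in E; rewrite Cmod_mult, Cmod_1 in E.
  pose proof (Cmod_ge_0 x); pose proof (Cmod_ge_0 y); nra.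
Qed.

Lemma one_sub_mul_neq0 (x y : C) : in_disk x -> in_disk y -> (1 - x * y)%C <> 0%C.
Proof.
  intros Hx Hy E; apply (Cmult_neq_1_in_disk x y Hx Hy).
  symmetry; apply Ceq_minus, E.
Qed.

Lemma in_disk_conj (z : C) : in_disk z -> in_disk (Cconj z).
Proof. unfold in_disk; rewrite Cmod_conj; auto. Qed.

Lemma in_disk_opp (z : C) : in_disk z -> in_disk (- z).
Proof. unfold in_disk; rewrite Cmod_opp; auto. Qed.

Section Sigma.
Variable a : C.
Hypothesis a_disk : in_disk a.

Lemma sigma_den_neq0 (z : C) : in_disk z -> (1 - Cconj a * z)%C <> 0%C.
Proof. intro; apply one_sub_mul_neq0; auto using in_disk_conj. Qed.

Lemma Cmod_sigma_den_sq (z : C) :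
  Cmod (1 - Cconj a * z) ^ 2 - Cmod (z - a) ^ 2 = (1 - Cmod a ^ 2) * (1 - Cmod z ^ 2).
Proof. rewrite !Cmod2_alt; destruct a as [a1 a2], z; simpl; ring. Qed.

Lemma sigma_in_disk (z : C) : in_disk z -> in_disk (sigma_a a z).
Proof.
  intro Hz. pose proof (sigma_den_neq0 z Hz) as D.
  unfold in_disk, sigma_a in *. rewrite Cmod_div by exact D.
  apply Cmod_gt_0 in D. apply Rlt_div_l; [exact D|]. rewrite Rmult_1_l.
  apply Rsqr_incrst_0; try apply Cmod_ge_0. unfold Rsqr.
  pose proof (Cmod_sigma_den_sq z). pose proof (Cmod_ge_0 a); pose proof (Cmod_ge_0 z).
  assert (0 < (1 - Cmod a ^ 2) * (1 - Cmod z ^ 2)) by (apply Rmult_lt_0_compat; nra).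
  nra.
Qed.

Lemma sigma_inj (p q : C) : in_disk p -> in_disk q -> sigma_a a p = sigma_a a q -> p = q.
Proof.
  intros Hp Hq E.
  pose proof (sigma_den_neq0 p Hp); pose proof (sigma_den_neq0 q Hq).
  assert (Haa : (1 - a * Cconj a)%C <> 0%C)
    by (apply one_sub_mul_neq0; auto using in_disk_conj).
  assert (Id : (q - p)%C = ((sigma_a a q - sigma_a a p)
                * ((1 - Cconj a * q) * (1 - Cconj a * p)) / (1 - a * Cconj a))%C)
    by (unfold sigma_a; field; auto).
  rewrite E in Id. symmetry; apply Ceq_minus; rewrite Id; field; exact Haa.
Qed.

Lemma sigma_conj (z : C) : in_disk z ->
  Cconj (sigma_a a z) = ((Cconj z - Cconj a) / (1 - a * Cconj z))%C.
Proof.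
  intro Hz. unfold sigma_a. rewrite Cdiv_conj by (apply sigma_den_neq0; auto).
  rewrite !Cminus_conj, Cmult_conj, Cconj_conj.
  f_equal; f_equal; apply injective_projections; simpl; ring.
Qed.

End Sigma.

(* For a valid [Orth c r], [|z - c|^2 - r^2] is the second expression, because
   [|c|^2 = 1 + r^2]. *)
Definition geod_eq (g : geod) (z : C) : R :=
  match g with
  | Diam u => Im (z * Cconj u)
  | Orth c r => (Cmod z ^ 2 + 1) - 2 * Re (z * Cconj c)
  end.

Lemma on_geod_iff (g : geod) (z : C) :
  valid_geod g -> on_geod g z <-> in_disk z /\ geod_eq g z = 0.
Proof.
  unfold on_geod; destruct g as [u | c r]; cbn [valid_geod geod_eq]; [tauto|].
  intros [Hr Hc].
  assert (E : Cmod (z - c) ^ 2 - r ^ 2 = Cmod z ^ 2 + 1 - 2 * Re (z * Cconj c))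
    by (rewrite Cmod_sub_sq; lra).
  split; intros [Hz H]; split; auto.
  - rewrite <- E, H; ring.
  - pose proof (Cmod_ge_0 (z - c)).
    apply Rsqr_inj; [lra|lra|]. unfold Rsqr; nra.
Qed.

Lemma geod_eq_comb (g : geod) (P Q : C) (l m : R) :
  Cmod (RtoC l * P + RtoC m * Q) ^ 2 + 1 = l * (Cmod P ^ 2 + 1) + m * (Cmod Q ^ 2 + 1) ->
  geod_eq g (RtoC l * P + RtoC m * Q) = l * geod_eq g P + m * geod_eq g Q.
Proof.
  intro N; destruct g as [u | c r]; cbn [geod_eq]; [|rewrite N];
    destruct P, Q; simpl; ring.
Qed.

Lemma on_geod_comb (g : geod) (P Q Z : C) (l m : R) :
  valid_geod g -> on_geod g P -> on_geod g Q -> in_disk Z ->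
  Z = (RtoC l * P + RtoC m * Q)%C ->
  Cmod Z ^ 2 + 1 = l * (Cmod P ^ 2 + 1) + m * (Cmod Q ^ 2 + 1) ->
  on_geod g Z.
Proof.
  intros Hg HP HQ HZ -> N.
  apply on_geod_iff in HP as [_ HP]; apply on_geod_iff in HQ as [_ HQ]; auto.
  apply on_geod_iff; auto. split; auto.
  rewrite geod_eq_comb, HP, HQ by exact N; ring.
Qed.

Lemma real_multiple_of_parallel (t T : C) : T <> 0%C -> Im (t * Cconj T) = 0 ->
  t = (RtoC (Re (t * Cconj T) / Cmod T ^ 2) * T)%C.
Proof.
  intros HT HI.
  assert (Hn : Cmod T ^ 2 <> 0) by (apply pow_nonzero; apply Cmod_gt_0 in HT; lra).
  rewrite Cmod2_alt in *.
  destruct t as [t1 t2], T as [u1 u2]; simpl in *.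
  assert (Hn' : u1 * u1 + u2 * u2 <> 0) by (contradict Hn; lra).
  assert (E : t2 * u1 = t1 * u2) by lra.
  apply injective_projections; simpl; field_simplify_eq; auto.
  - replace (u1 * t2 * u2) with (t2 * u1 * u2) by ring; rewrite E; ring.
  - replace (t1 * u1 * u2) with (t1 * u2 * u1) by ring; rewrite <- E; ring.
Qed.

(* [geod_dir P Q = |1 - conj P Q|^2 sigma_a P Q]: [sigma_a P] maps the geodesic
   through [P] and [Q] onto the diameter through [sigma_a P Q], and its derivative
   at [P] is positive, so this is a tangent direction at [P]. *)
Definition geod_dir (P Q : C) : C := ((Q - P) * (1 - P * Cconj Q))%C.

Lemma geod_dir_neq0 (P Q : C) : in_disk P -> in_disk Q -> P <> Q -> geod_dir P Q <> 0%C.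
Proof.
  intros HP HQ HPQ. apply Cmult_neq_0.
  - apply Cminus_eq_contra; auto.
  - apply one_sub_mul_neq0; auto using in_disk_conj.
Qed.

Lemma tangent_neq0 (g : geod) (P : C) : valid_geod g -> on_geod g P -> tangent g P <> 0%C.
Proof.
  intros Hg [_ HP]; destruct g as [u | c r]; cbn in Hg, HP |- *; auto.
  apply Cmult_neq_0; [exact Ci_nz|]. intro E.
  rewrite E, Cmod_0 in HP; lra.
Qed.

Lemma tangent_geod_dir_parallel (g : geod) (P Q : C) :
  valid_geod g -> on_geod g P -> on_geod g Q ->
  Im (tangent g P * Cconj (geod_dir P Q)) = 0.
Proof.
  intros Hg HP HQ.
  apply on_geod_iff in HP as [_ HP]; apply on_geod_iff in HQ as [_ HQ]; auto.
  unfold geod_dir; destruct g as [u | c r]; cbn [tangent].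
  - cbn [geod_eq valid_geod] in *.
    rewrite (real_multiple_of_parallel P u), (real_multiple_of_parallel Q u) by auto.
    generalize (Re (P * Cconj u) / Cmod u ^ 2) (Re (Q * Cconj u) / Cmod u ^ 2).
    intros s t; destruct u; simpl; ring.
  - transitivity ((Re (P * Cconj Q) - Re (Q * Cconj c)) * geod_eq (Orth c r) P
                  + (Re (P * Cconj c) - Cmod P ^ 2) * geod_eq (Orth c r) Q).
    + cbn [geod_eq]; rewrite !Cmod2_alt; destruct P, Q, c; simpl; ring.
    + rewrite HP, HQ; ring.
Qed.

Lemma tangent_geod_dir (g : geod) (P Q : C) :
  valid_geod g -> on_geod g P -> on_geod g Q -> P <> Q ->
  exists l : R, l <> 0 /\ tangent g P = (RtoC l * geod_dir P Q)%C.
Proof.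
  intros Hg HP HQ HPQ.
  pose proof (geod_dir_neq0 P Q (proj1 HP) (proj1 HQ) HPQ) as HD.
  pose proof (tangent_geod_dir_parallel g P Q Hg HP HQ) as HI.
  pose proof (real_multiple_of_parallel _ _ HD HI) as E.
  eexists; split; [|exact E].
  intro L; apply (tangent_neq0 g P Hg HP); rewrite E, L; ring.
Qed.

Lemma Re_mul_conj_solve (P Q : C) (A B : R) : Im (P * Cconj Q) <> 0 ->
  exists c : C, Re (P * Cconj c) = A /\ Re (Q * Cconj c) = B.
Proof.
  destruct P as [p1 p2], Q as [q1 q2]; simpl; intro Hd.
  assert (Hd' : p1 * q2 - p2 * q1 <> 0) by (contradict Hd; lra).
  exists ((A * q2 - B * p2) / (p1 * q2 - p2 * q1), (p1 * B - q1 * A) / (p1 * q2 - p2 * q1)).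
  simpl; split; field; exact Hd'.
Qed.

Lemma geod_exists (P Q : C) : in_disk P -> in_disk Q -> P <> Q ->
  exists g, geod_through g P Q.
Proof.
  intros HP HQ HPQ.
  destruct (Req_dec (Im (P * Cconj Q)) 0) as [HD | HD].
  - destruct (Ceq_dec P 0) as [-> | HP0].
    + exists (Diam Q); repeat split; auto.
      * exact (not_eq_sym HPQ).
      * destruct Q; simpl; ring.
    + exists (Diam P); repeat split; auto.
      * destruct P; simpl; ring.
      * destruct P, Q; simpl in *; lra.
  - destruct (Re_mul_conj_solve P Q ((Cmod P ^ 2 + 1) / 2) ((Cmod Q ^ 2 + 1) / 2) HD)
      as [c [EP EQ]].
    assert (Hr2 : Cmod (P - c) ^ 2 = Cmod c ^ 2 - 1) by (rewrite Cmod_sub_sq; lra).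
    assert (Hr : 0 < Cmod (P - c)).
    { apply Cmod_gt_0; intro E; apply Ceq_minus in E; subst c.
      assert (Re (P * Cconj P) = Cmod P ^ 2) by (rewrite Cmod2_alt; destruct P; simpl; ring).
      unfold in_disk in HP; pose proof (Cmod_ge_0 P); nra. }
    assert (Hg : valid_geod (Orth c (Cmod (P - c)))) by (split; [exact Hr | lra]).
    exists (Orth c (Cmod (P - c))); split; [exact Hg|].
    split; apply on_geod_iff; auto; split; auto; cbn [geod_eq]; lra.
Qed.

(* The map [M (z, |z|^2 + 1) := |1 - conj a z|^2 (sigma_a a z, |sigma_a a z|^2 + 1)]
   on lifted points is real-linear, and [-a = sigma_a a 0] with
   [(0, 1) = ((w, |w|^2 + 1) + (-w, |w|^2 + 1)) / D]; applying [M] gives [l] and [m]. *)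
Lemma sigma_opp_lift_comb (a w : C) : in_disk a -> in_disk w ->
  let D := 2 * (1 + Cmod w ^ 2) in
  let l := Cmod (1 - Cconj a * w) ^ 2 / D in
  let m := Cmod (1 + Cconj a * w) ^ 2 / D in
  (- a)%C = (RtoC l * sigma_a a w + RtoC m * sigma_a a (- w))%C /\
  Cmod (- a) ^ 2 + 1
  = l * (Cmod (sigma_a a w) ^ 2 + 1) + m * (Cmod (sigma_a a (- w)) ^ 2 + 1).
Proof.
  intros Ha Hw D l m.
  pose proof (in_disk_opp w Hw) as Hw'.
  pose proof (sigma_den_neq0 a Ha w Hw); pose proof (sigma_den_neq0 a Ha (- w) Hw').
  pose proof (one_sub_mul_neq0 a (Cconj w) Ha (in_disk_conj w Hw)).
  pose proof (one_sub_mul_neq0 a (Cconj (- w)) Ha (in_disk_conj _ Hw')).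
  assert (HD : D <> 0) by (unfold D; pose proof (pow2_ge_0 (Cmod w)); lra).
  assert (HD' : RtoC D = (2 * (1 + w * Cconj w))%C)
    by (unfold D; rewrite RtoC_mult, RtoC_plus, Cmod2_conj; reflexivity).
  assert (HDC : (2 * (1 + w * Cconj w))%C <> 0%C)
    by (rewrite <- HD'; intro E; apply HD, RtoC_inj, E).
  assert (H1w : (1 + w * Cconj w)%C <> 0%C) by (intro E; apply HDC; rewrite E; ring).
  assert (Hl : RtoC l = ((1 - Cconj a * w) * (1 - a * Cconj w) / (2 * (1 + w * Cconj w)))%C).
  { unfold l; rewrite RtoC_div, <- HD', Cmod2_conj by exact HD.
    rewrite Cminus_conj, Cmult_conj, Cconj_conj.
    f_equal; f_equal; f_equal; apply injective_projections; simpl; ring. }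
  assert (Hm : RtoC m = ((1 + Cconj a * w) * (1 + a * Cconj w) / (2 * (1 + w * Cconj w)))%C).
  { unfold m; rewrite RtoC_div, <- HD', Cmod2_conj by exact HD.
    rewrite Cplus_conj, Cmult_conj, Cconj_conj.
    f_equal; f_equal; f_equal; apply injective_projections; simpl; ring. }
  split.
  - rewrite Hl, Hm; unfold sigma_a; field; repeat split; assumption.
  - apply RtoC_inj.
    rewrite !RtoC_plus, !RtoC_mult, !RtoC_plus, !Cmod2_conj, Hl, Hm.
    rewrite !sigma_conj, Copp_conj by auto. unfold sigma_a.
    rewrite Copp_conj in *.
    field; repeat split; assumption.
Qed.

Lemma geod_exists_sigma (a p q : C) : in_disk a -> in_disk p -> in_disk q -> p <> q ->
  exists g, geod_through g (sigma_a a p) (sigma_a a q).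
Proof.
  intros Ha Hp Hq Hpq. apply geod_exists; try apply sigma_in_disk; auto.
  intros E%sigma_inj; auto.
Qed.

Lemma sigma_opp_geod (a w : C) : in_disk a -> in_disk w -> w <> 0%C ->
  (exists g, geod_through g (sigma_a a w) (sigma_a a (- w))) /\
  (forall g, geod_through g (sigma_a a w) (sigma_a a (- w)) -> on_geod g (- a)).
Proof.
  intros Ha Hw Hw0. pose proof (in_disk_opp w Hw) as Hw'.
  split.
  - apply geod_exists_sigma; auto. intro E.
    apply Hw0; destruct w; injection E; intros; apply injective_projections; simpl; lra.
  - intros g [Hg [H1 H2]]. destruct (sigma_opp_lift_comb a w Ha Hw) as [E N].
    exact (on_geod_comb g _ _ _ _ _ Hg H1 H2 (in_disk_opp a Ha) E N).
Qed.

(* The complex factor is [sigma_a' a p / (1 - |a|^2)], independent of [q]. *)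
Lemma geod_dir_sigma (a p q : C) : in_disk a -> in_disk p -> in_disk q ->
  geod_dir (sigma_a a p) (sigma_a a q)
  = (RtoC ((1 - Cmod a ^ 2) ^ 2 / Cmod (1 - Cconj a * q) ^ 2)
     * (/ ((1 - Cconj a * p) * (1 - Cconj a * p)) * geod_dir p q))%C.
Proof.
  intros Ha Hp Hq.
  pose proof (sigma_den_neq0 a Ha p Hp); pose proof (sigma_den_neq0 a Ha q Hq) as Dq.
  pose proof (one_sub_mul_neq0 a (Cconj q) Ha (in_disk_conj q Hq)).
  assert (Hm : Cmod (1 - Cconj a * q) ^ 2 <> 0)
    by (apply pow_nonzero, Rgt_not_eq, Cmod_gt_0, Dq).
  rewrite RtoC_div by exact Hm.
  rewrite (RtoC_pow (1 - Cmod a ^ 2) 2), RtoC_minus, !Cmod2_conj.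
  rewrite Cminus_conj, Cmult_conj, Cconj_conj.
  unfold geod_dir; rewrite sigma_conj by auto; unfold sigma_a.
  replace (Cconj (RtoC 1)) with (RtoC 1) by (apply injective_projections; simpl; ring).
  field; auto.
Qed.

Lemma line_angle_scaleR (al be : R) (d1 d2 : C) : al <> 0 -> be <> 0 ->
  line_angle (RtoC al * d1) (RtoC be * d2) = line_angle d1 d2.
Proof.
  intros Ha Hb. unfold line_angle. f_equal.
  replace (Re (RtoC al * d1 * Cconj (RtoC be * d2))) with (al * be * Re (d1 * Cconj d2))
    by (destruct d1, d2; simpl; ring).
  rewrite !Cmod_mult, !Cmod_R, !Rabs_mult.
  replace (Rabs al * Cmod d1 * (Rabs be * Cmod d2))
    with (Rabs al * Rabs be * (Cmod d1 * Cmod d2)) by ring.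
  apply Rdiv_mult_l_l.
  apply Rmult_integral_contrapositive; split; apply Rabs_no_R0; assumption.
Qed.

Lemma line_angle_mul (k d1 d2 : C) : k <> 0%C ->
  line_angle (k * d1) (k * d2) = line_angle d1 d2.
Proof.
  intro Hk. unfold line_angle. f_equal.
  replace (Re (k * d1 * Cconj (k * d2))) with (Cmod k ^ 2 * Re (d1 * Cconj d2))
    by (rewrite Cmod2_alt; destruct k, d1, d2; simpl; ring).
  rewrite !Cmod_mult, Rabs_mult, (Rabs_pos_eq (Cmod k ^ 2)) by (apply pow_le, Cmod_ge_0).
  replace (Cmod k * Cmod d1 * (Cmod k * Cmod d2)) with (Cmod k ^ 2 * (Cmod d1 * Cmod d2))
    by ring.
  apply Rdiv_mult_l_l, pow_nonzero, Rgt_not_eq, Cmod_gt_0, Hk.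
Qed.

Lemma geod_angle_sigma (a p q1 q2 : C) (g1 g2 h1 h2 : geod) :
  in_disk a -> q1 <> p -> p <> q2 ->
  geod_through g1 q1 p -> geod_through g2 p q2 ->
  geod_through h1 (sigma_a a q1) (sigma_a a p) ->
  geod_through h2 (sigma_a a p) (sigma_a a q2) ->
  geod_angle h1 h2 (sigma_a a p) = geod_angle g1 g2 p.
Proof.
  intros Ha N1 N2 [V1 [O1q O1p]] [V2 [O2p O2q]] [V3 [O3q O3p]] [V4 [O4p O4q]].
  pose proof (proj1 O1p) as Hp; pose proof (proj1 O1q) as Hq1; pose proof (proj1 O2q) as Hq2.
  assert (S1 : sigma_a a p <> sigma_a a q1) by (intros E%sigma_inj; auto).
  assert (S2 : sigma_a a p <> sigma_a a q2) by (intros E%sigma_inj; auto).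
  destruct (tangent_geod_dir g1 p q1 V1 O1p O1q (not_eq_sym N1)) as [l1 [L1 T1]].
  destruct (tangent_geod_dir g2 p q2 V2 O2p O2q N2) as [l2 [L2 T2]].
  destruct (tangent_geod_dir h1 _ _ V3 O3p O3q S1) as [l3 [L3 T3]].
  destruct (tangent_geod_dir h2 _ _ V4 O4p O4q S2) as [l4 [L4 T4]].
  assert (Hrho : forall q, in_disk q ->
            (1 - Cmod a ^ 2) ^ 2 / Cmod (1 - Cconj a * q) ^ 2 <> 0).
  { intros q Hq. pose proof (proj1 (Cmod_gt_0 _) (sigma_den_neq0 a Ha q Hq)).
    unfold in_disk in Ha; pose proof (Cmod_ge_0 a).
    apply Rgt_not_eq, Rdiv_lt_0_compat; apply pow_lt; nra. }
  assert (Hk : (/ ((1 - Cconj a * p) * (1 - Cconj a * p)))%C <> 0%C).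
  { pose proof (sigma_den_neq0 a Ha p Hp) as D.
    intro E; apply C1_nz; rewrite <- (Cinv_r _ (Cmult_neq_0 _ _ D D)), E; ring. }
  unfold geod_angle; rewrite T1, T2, T3, T4, !geod_dir_sigma by auto.
  rewrite !Cmult_assoc, <- !RtoC_mult, <- !Cmult_assoc.
  rewrite line_angle_scaleR, line_angle_mul, line_angle_scaleR; auto;
    apply Rmult_integral_contrapositive; auto.
Qed.

Lemma geod_angles_sigma (a p q1 q2 : C) :
  in_disk a -> in_disk p -> in_disk q1 -> in_disk q2 -> q1 <> p -> p <> q2 ->
  (exists g1, geod_through g1 q1 p) /\
  (exists g2, geod_through g2 p q2) /\
  (exists h1, geod_through h1 (sigma_a a q1) (sigma_a a p)) /\
  (exists h2, geod_through h2 (sigma_a a p) (sigma_a a q2)) /\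
  (forall g1 g2 h1 h2,
     geod_through g1 q1 p -> geod_through g2 p q2 ->
     geod_through h1 (sigma_a a q1) (sigma_a a p) ->
     geod_through h2 (sigma_a a p) (sigma_a a q2) ->
     geod_angle h1 h2 (sigma_a a p) = geod_angle g1 g2 p).
Proof.
  intros Ha Hp Hq1 Hq2 N1 N2.
  split; [apply geod_exists; auto|].
  split; [apply geod_exists; auto|].
  split; [apply geod_exists_sigma; auto|].
  split; [apply geod_exists_sigma; auto|].
  intros g1 g2 h1 h2; apply geod_angle_sigma; auto.
Qed.

Lemma cos_eq_1_0_2PI (x : R) : 0 <= x < 2 * PI -> cos x = 1 -> x = 0.
Proof.
  intros [H0 H2] Hc.
  assert (Hs : sin x = 0) by (pose proof (sin2_cos2 x) as E; unfold Rsqr in E; nra).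
  destruct (sin_eq_O_2PI_0 x H0 (Rlt_le _ _ H2) Hs) as [E | [E | E]]; [exact E | | lra].
  rewrite E, cos_PI in Hc; lra.
Qed.

Lemma cos_sub_eq_1 (x y : R) : cos x = cos y -> sin x = sin y -> cos (x - y) = 1.
Proof.
  intros Hc Hs; rewrite cos_minus, Hc, Hs.
  pose proof (sin2_cos2 y) as E; unfold Rsqr in E; lra.
Qed.

Section EquallySpaced.
Variables (N : nat) (theta : nat -> R).
Hypothesis theta_range : forall j, (j < N)%nat -> 0 <= theta j < 2 * PI.
Hypothesis theta_incr : forall i j, (i < j)%nat -> (j < N)%nat -> theta i < theta j.
Hypothesis theta_cos_diff :
  forall i j, (i < N)%nat -> (j < N)%nat -> cos (INR N * (theta j - theta i)) = 1.

Let N_pos (i j : nat) : (i < j)%nat -> (j < N)%nat -> 0 < INR N.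
Proof. intros; apply lt_0_INR; lia. Qed.

Lemma theta_gap_ge (i j : nat) : (i < j)%nat -> (j < N)%nat ->
  2 * PI / INR N <= theta j - theta i.
Proof.
  intros Hij Hj. pose proof (N_pos i j Hij Hj).
  pose proof (theta_incr i j Hij Hj).
  apply Rle_div_l; [lra|].
  destruct (Rlt_le_dec (INR N * (theta j - theta i)) (2 * PI)) as [L | L]; [|lra].
  assert (E : INR N * (theta j - theta i) = 0)
    by (apply cos_eq_1_0_2PI; [split; [nra | exact L] | apply theta_cos_diff; lia]).
  nra.
Qed.

Lemma theta_gap_ge_iter (d i : nat) : (i + d < N)%nat ->
  INR d * (2 * PI / INR N) <= theta (i + d)%nat - theta i.
Proof.
  induction d as [|d IH]; intro H.
  - rewrite Nat.add_0_r; simpl; lra.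
  - rewrite S_INR. pose proof (IH ltac:(lia)).
    pose proof (theta_gap_ge (i + d) (i + S d) ltac:(lia) H). lra.
Qed.

Lemma theta_gap_succ (j : nat) : (j + 1 < N)%nat ->
  theta (j + 1)%nat - theta j = 2 * PI / INR N.
Proof.
  intro Hj. pose proof (N_pos j (j + 1) ltac:(lia) Hj) as HN.
  set (delta := 2 * PI / INR N).
  assert (HNd : INR N * delta = 2 * PI) by (unfold delta; field; lra).
  pose proof (theta_gap_ge j (j + 1) ltac:(lia) Hj) as Lo; fold delta in Lo.
  assert (Up : theta (j + 1)%nat - theta j < 2 * delta).
  { pose proof (theta_gap_ge_iter j 0 ltac:(lia)) as G1.
    pose proof (theta_gap_ge_iter (N - 2 - j) (j + 1) ltac:(lia)) as G2.
    replace (j + 1 + (N - 2 - j))%nat with (N - 1)%nat in G2 by lia.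
    rewrite !minus_INR in G2 by lia.
    fold delta in G1, G2.
    destruct (theta_range 0 ltac:(lia)); destruct (theta_range (N - 1) ltac:(lia)).
    simpl Nat.add in G1; simpl INR in G2. lra. }
  set (x := INR N * (theta (j + 1)%nat - theta j) - 2 * PI).
  assert (Hx : x = 0).
  { apply cos_eq_1_0_2PI; unfold x.
    - split; nra.
    - rewrite cos_minus, cos_2PI, sin_2PI, theta_cos_diff by lia; ring. }
  unfold x in Hx. apply (Rmult_eq_reg_l (INR N)); lra.
Qed.

Lemma theta_arith (j : nat) : (j < N)%nat -> theta j = theta 0%nat + INR j * (2 * PI / INR N).
Proof.
  induction j as [|j IH]; intro Hj; [simpl; ring|].
  rewrite S_INR, <- Nat.add_1_r.
  pose proof (theta_gap_succ j ltac:(lia)); rewrite IH in * by lia; lra.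
Qed.

End EquallySpaced.

Lemma Cpow_polar (r t : R) (n : nat) :
  Cpow (r * cos t, r * sin t) n = (r ^ n * cos (INR n * t), r ^ n * sin (INR n * t)).
Proof.
  induction n as [|n IH].
  - simpl; rewrite Rmult_0_l, cos_0, sin_0; apply injective_projections; simpl; ring.
  - rewrite Cpow_S, IH, S_INR.
    replace ((INR n + 1) * t) with (t + INR n * t) by ring.
    rewrite cos_plus, sin_plus; apply injective_projections; simpl; ring.
Qed.

Lemma polar_cos_sub_eq_1 (r x y : R) : 0 < r ->
  ((r * cos x, r * sin x) : C) = (r * cos y, r * sin y) -> cos (x - y) = 1.
Proof.
  intros Hr E; injection E; intros Es Ec.
  apply cos_sub_eq_1; eapply Rmult_eq_reg_l; eauto; lra.
Qed.

Lemma is_arg_inj (z : C) (s t : R) : z <> 0%C -> is_arg z s -> is_arg z t -> s = t.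
Proof.
  intros Hz [Hs Es] [Ht Et]. apply Cmod_gt_0 in Hz.
  assert (C1 : cos (t - s) = 1) by (apply (polar_cos_sub_eq_1 (Cmod z)); congruence).
  assert (C2 : cos (s - t) = 1) by (apply (polar_cos_sub_eq_1 (Cmod z)); congruence).
  destruct (Rle_dec s t).
  - assert (t - s = 0) by (apply cos_eq_1_0_2PI; [lra | exact C1]); lra.
  - assert (s - t = 0) by (apply cos_eq_1_0_2PI; [lra | exact C2]); lra.
Qed.

Lemma is_arg_add_PI (z z' : C) (t : R) :
  Cmod z' = Cmod z -> is_arg z t -> is_arg z' (t + PI) -> z' = (- z)%C.
Proof.
  intros Hm [_ E] [_ E']. rewrite E', E, Hm, neg_cos, neg_sin.
  apply injective_projections; simpl; ring.
Qed.

Lemma root_in_disk (a z : C) (n : nat) : (1 <= n)%nat -> in_disk a -> Cpow z n = a ->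
  in_disk z.
Proof.
  unfold in_disk; intros Hn Ha <-. rewrite Cmod_pow in Ha.
  destruct (Rlt_le_dec (Cmod z) 1) as [L | L]; [exact L|].
  pose proof (pow_R1_Rle _ n L); lra.
Qed.

Lemma root_neq0 (a z : C) (n : nat) : (1 <= n)%nat -> a <> 0%C -> Cpow z n = a -> z <> 0%C.
Proof.
  intros Hn Ha <- ->. apply Ha.
  destruct n as [|n]; [lia|]. rewrite Cpow_S; ring.
Qed.

Lemma pow_inj_nonneg (x y : R) (n : nat) : (1 <= n)%nat -> 0 <= x -> 0 <= y ->
  x ^ n = y ^ n -> x = y.
Proof.
  intros Hn Hx Hy E.
  assert (Hlt : forall u v, 0 <= u -> u < v -> u ^ n < v ^ n).
  { intros u v Hu Huv. destruct n as [|m]; [lia|]. simpl.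
    pose proof (pow_incr u v m (conj Hu (Rlt_le _ _ Huv))).
    pose proof (pow_le u m Hu). pose proof (pow_lt v m ltac:(lra)). nra. }
  destruct (Rtotal_order x y) as [L | [L | L]]; auto.
  - pose proof (Hlt x y Hx L); lra.
  - pose proof (Hlt y x Hy L); lra.
Qed.

Lemma roots_Cmod_eq (a z z' : C) (n : nat) : (1 <= n)%nat ->
  Cpow z n = a -> Cpow z' n = a -> Cmod z = Cmod z'.
Proof.
  intros Hn E E'. apply (pow_inj_nonneg _ _ n); auto using Cmod_ge_0.
  rewrite <- !Cmod_pow, E, E'; reflexivity.
Qed.

Lemma root_args_cos_diff (a z z' : C) (s t : R) (n : nat) : (1 <= n)%nat -> a <> 0%C ->
  Cpow z n = a -> Cpow z' n = a -> is_arg z s -> is_arg z' t ->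
  cos (INR n * (t - s)) = 1.
Proof.
  intros Hn Ha E E' [_ Ps] [_ Pt].
  pose proof (roots_Cmod_eq a z z' n Hn E E') as Hm.
  assert (Hr : 0 < Cmod z ^ n).
  { apply pow_lt, Cmod_gt_0, (root_neq0 a z n); auto. }
  rewrite Rmult_minus_distr_l.
  apply (polar_cos_sub_eq_1 (Cmod z ^ n)); [exact Hr|].
  rewrite <- !Cpow_polar, <- Ps, Hm, <- Pt; congruence.
Qed.

Lemma sorted_args_inj (N : nat) (w : nat -> C) (theta : nat -> R) :
  (forall j, (j < N)%nat -> w j <> 0%C) ->
  (forall j, (j < N)%nat -> is_arg (w j) (theta j)) ->
  (forall i j, (i < j)%nat -> (j < N)%nat -> theta i < theta j) ->
  forall i j, (i < N)%nat -> (j < N)%nat -> i <> j -> w i <> w j.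
Proof.
  intros Hnz Harg Hincr i j Hi Hj Hij E.
  pose proof (is_arg_inj (w j) _ _ (Hnz j Hj) (Harg j Hj) ltac:(rewrite <- E; auto)).
  destruct (Nat.lt_gt_cases i j) as [[L | L] _]; auto;
    [pose proof (Hincr i j L Hj) | pose proof (Hincr j i L Hi)]; lra.
Qed.

Lemma sorted_roots_opp (k : nat) (a : C) (w : nat -> C) (theta : nat -> R) :
  (1 <= k)%nat -> a <> 0%C ->
  (forall j, (j < 2 * k)%nat -> Cpow (w j) (2 * k) = a) ->
  (forall j, (j < 2 * k)%nat -> is_arg (w j) (theta j)) ->
  (forall i j, (i < j)%nat -> (j < 2 * k)%nat -> theta i < theta j) ->
  forall j, (j < 2 * k)%nat -> w (Nat.modulo (j + k) (2 * k)) = (- w j)%C.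
Proof.
  intros Hk Ha Hroot Harg Hincr.
  assert (Harith : forall j, (j < 2 * k)%nat ->
            theta j = theta 0%nat + INR j * (2 * PI / INR (2 * k))).
  { intros j Hj; apply theta_arith; auto.
    - intros i Hi; apply (Harg i Hi).
    - intros i i' Hi Hi'; apply (root_args_cos_diff a (w i) (w i')); auto; lia. }
  assert (Hshift : forall j, (j < k)%nat -> w (j + k)%nat = (- w j)%C).
  { intros j Hj. apply (is_arg_add_PI _ _ (theta j)).
    - apply (roots_Cmod_eq a _ _ (2 * k)); [lia | apply Hroot; lia | apply Hroot; lia].
    - apply Harg; lia.
    - replace (theta j + PI) with (theta (j + k)%nat); [apply Harg; lia|].
      assert (0 < INR k) by (apply lt_0_INR; lia).
      rewrite (Harith (j + k)%nat), (Harith j), plus_INR, mult_INR by lia.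
      simpl INR; field; lra. }
  intros j Hj. destruct (Nat.lt_ge_cases j k) as [L | L].
  - rewrite Nat.mod_small by lia; auto.
  - rewrite <- (Nat.mod_unique (j + k) (2 * k) 1 (j - k)) by lia.
    pose proof (Hshift (j - k)%nat ltac:(lia)) as E.
    replace (j - k + k)%nat with j in E by lia.
    rewrite E; ring.
Qed.

Lemma mod_add_neq (n j d : nat) : (j < n)%nat -> (0 < d < n)%nat ->
  Nat.modulo (j + d) n <> j.
Proof.
  intros Hj Hd E. pose proof (Nat.div_mod_eq (j + d) n) as D.
  rewrite E in D. destruct ((j + d) / n)%nat as [|q]; nia.
Qed.

Theorem proposition3p7 (k : nat) (a : C) (w : nat -> C) :
  (1 <= k)%nat -> in_disk a -> a <> 0%C ->
  (* w 0, ..., w (2k-1) are 2k-th roots of a ... *)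
  (forall j, (j < 2 * k)%nat -> Cpow (w j) (2 * k) = a) ->
  (* ... listed in strictly increasing order of principal argument in [0, 2pi) *)
  (exists theta : nat -> R,
     (forall j, (j < 2 * k)%nat -> is_arg (w j) (theta j)) /\
     (forall i j, (i < j)%nat -> (j < 2 * k)%nat -> theta i < theta j)) ->
  (* (1) opposite zeros: their geodesic passes through -a *)
  (forall j, (j < 2 * k)%nat ->
     w (Nat.modulo (j + k) (2 * k)) = Copp (w j) /\
     (exists g, geod_through g (sigma_a a (w j)) (sigma_a a (w (Nat.modulo (j + k) (2 * k))))) /\
     (forall g, geod_through g (sigma_a a (w j)) (sigma_a a (w (Nat.modulo (j + k) (2 * k)))) ->
        on_geod g (Copp a))) /\
  (* (2) angles at consecutive zeros equal the angles at consecutive roots *)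
  (forall j, (j < 2 * k)%nat ->
     let jm := (Nat.modulo (j + 2 * k - 1) (2 * k)) in
     let jp := (Nat.modulo (j + 1) (2 * k)) in
     (exists g1, geod_through g1 (w jm) (w j)) /\
     (exists g2, geod_through g2 (w j) (w jp)) /\
     (exists h1, geod_through h1 (sigma_a a (w jm)) (sigma_a a (w j))) /\
     (exists h2, geod_through h2 (sigma_a a (w j)) (sigma_a a (w jp))) /\
     (forall g1 g2 h1 h2,
        geod_through g1 (w jm) (w j) -> geod_through g2 (w j) (w jp) ->
        geod_through h1 (sigma_a a (w jm)) (sigma_a a (w j)) ->
        geod_through h2 (sigma_a a (w j)) (sigma_a a (w jp)) ->
        geod_angle h1 h2 (sigma_a a (w j)) = geod_angle g1 g2 (w j))).
Proof.
  intros Hk Ha Ha0 Hroot [theta [Harg Hincr]].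
  assert (Hdisk : forall j, (j < 2 * k)%nat -> in_disk (w j))
    by (intros j Hj; apply (root_in_disk a _ (2 * k)); auto; lia).
  assert (Hnz : forall j, (j < 2 * k)%nat -> w j <> 0%C)
    by (intros j Hj; apply (root_neq0 a _ (2 * k)); auto; lia).
  pose proof (sorted_args_inj (2 * k) w theta Hnz Harg Hincr) as Hinj.
  split.
  - intros j Hj. rewrite (sorted_roots_opp k a w theta) by auto.
    split; [reflexivity|]. apply sigma_opp_geod; auto.
  - intros j Hj jm jp.
    assert (Hjm : (jm < 2 * k)%nat) by (apply Nat.mod_upper_bound; lia).
    assert (Hjp : (jp < 2 * k)%nat) by (apply Nat.mod_upper_bound; lia).
    apply geod_angles_sigma; auto; apply Hinj; auto.
    + unfold jm; rewrite <- Nat.add_sub_assoc by lia; apply mod_add_neq; lia.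
    + apply not_eq_sym, mod_add_neq; lia.
Qed.
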